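(* Let $N\ge1$, let $L_1,\dots,L_N$, $K_1,\dots,K_N$ be positive integers with $K_n\le L_n$, let $P$ be a positive integer, and let $H$ be a TTM-tree (as defined in the context) with $|H|$ nodes. Let $\psi(P,N)$ be the number of ordered $N$-tuples of positive integers whose product is $P$. There is a dynamic-programming algorithm that computes a dynamic grid scheme for $H$ of minimum total communication volume (over all dynamic grid schemes using valid grids), using $O(|H|\cdot\psi(P,N))$ dynamic-programming table lookups.
   Context: A TTM-tree is a finite rooted tree whose root carries the label ''input tensor'', with exactly $N$ leaves labelled bijectively by $\{1,\dots,N\}$, whose internal nodes (neither root nor leaf) are labelled by modes in $\{1,\dots,N\}$, and such that for each leaf labelled $n$ the root-to-leaf path contains exactly $N-1$ internal nodes, carrying every mode other than $n$. Cardinalities: $c(\text{root})=\prod_j L_j$, and for an internal node $u$ with label $n$ and parent $v$, $|\mathrm{In}(u)|=c(v)$ and $|\mathrm{Out}(u)|=c(u)=(K_n/L_n)c(v)$. A grid is an $N$-tuple $g=(q_1,\dots,q_N)$ of positive integers with $\prod_j q_j=P$; it is valid if $q_n\le K_n$ for all $n$. A dynamic grid scheme $\pi$ assigns a valid grid $\pi(u)$ to every node $u$ of $H$. Its volume is the sum over all internal nodes $u$ (with label $n$ and parent $v$) of $(q_n-1)\,|\mathrm{Out}(u)|$, where $q_n$ is the $n$-th entry of $\pi(u)$, plus $|\mathrm{In}(u)|$ if $\pi(u)\neq\pi(v)$ (regridding cost) and $0$ otherwise. The grid at the root is free (no regridding cost at the root). *)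

From HB Require Import structures.
From mathcomp Require Import all_boot all_order all_algebra.
Set Implicit Arguments.
Unset Strict Implicit.
Unset Printing Implicit Defensive.
Import Order.TTheory GRing.Theory Num.Theory.

Inductive tree (A : Type) := Nd of A & seq (tree A).
Arguments Nd {A}.

Fixpoint tree_nodes A (t : tree A) : nat :=
  let: Nd _ ts := t in (sumn (map (@tree_nodes A) ts)).+1.

Fixpoint tree_labels A (t : tree A) : seq A :=
  let: Nd a ts := t in a :: flatten (map (@tree_labels A) ts).

Fixpoint same_shape A B (t : tree A) (s : tree B) : bool :=
  let: Nd _ ts := t in let: Nd _ ss := s in
  (fix go (ts : seq (tree A)) (ss : seq (tree B)) : bool :=
     match ts, ss with
     | [::], [::] => true
     | t1 :: ts1, s1 :: ss1 => same_shape t1 s1 && go ts1 ss1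
     | _, _ => false
     end) ts ss.

(* TTM-trees.  A TTM-tree H is represented by the list of the subtrees *)
(* hanging from its root (the root, labelled "input tensor", carries no *)
(* mode).  A node with no children is a leaf; every other non-root node *)
(* is internal.  Modes are 'I_N (mode n+1 of the paper is n : 'I_N).    *)
Definition ttm_tree (N : nat) := seq (tree 'I_N).

Fixpoint leaf_paths N (t : tree 'I_N) : seq ('I_N * seq 'I_N) :=
  let: Nd n ts := t in
  if ts is [::] then [:: (n, [::])]
  else [seq (x.1, n :: x.2) | x <- flatten (map (@leaf_paths N) ts)].

Definition is_TTM N (H : ttm_tree N) : bool :=
  let lp := flatten (map (@leaf_paths N) H) in
  perm_eq (map fst lp) (enum 'I_N) &&
  all (fun x => (size x.2 == N.-1) &&
                all (fun m => (m != x.1) ==> (m \in x.2)) (enum 'I_N)) lp.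

(* |H| : number of nodes, root included *)
Definition ttm_size N (H : ttm_tree N) : nat := (sumn (map (@tree_nodes 'I_N) H)).+1.

Definition grid (N : nat) := {ffun 'I_N -> nat}.

Definition is_grid N (P : nat) (g : grid N) : bool :=
  [forall i, 0 < g i]%N && (\prod_i g i == P)%N.

Definition valid_grid N (P : nat) (K : 'I_N -> nat) (g : grid N) : bool :=
  is_grid P g && [forall n, g n <= K n]%N.

(* psi(P,N): number of ordered N-tuples of positive integers with product P.
   (Each entry of such a tuple is <= P, so they are enumerated in 'I_P.+1.) *)
Definition psi (P N : nat) : nat :=
  #|[set g : {ffun 'I_N -> 'I_P.+1} | [forall i, 0 < (g i : nat)]%N
                                     && (\prod_i (g i : nat) == P)%N]|.

(* A dynamic grid scheme: a grid at the root, and a tree of grids for each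
   root subtree (same shape as H). *)
Definition scheme N := (grid N * seq (tree (grid N)))%type.

Definition is_scheme N (P : nat) (K : 'I_N -> nat) (H : ttm_tree N) (pi : scheme N) : bool :=
  [&& valid_grid P K pi.1,
      (size H == size pi.2),
      all (fun p => same_shape p.1 p.2) (zip H pi.2)
    & all (fun s => all (valid_grid P K) (tree_labels s)) pi.2].

Local Open Scope ring_scope.

(* Volume contributed by the subtree t (schemed by s), whose parent has
   cardinality cp and grid gp.  Cardinalities are rationals, computed
   exactly as in the paper: c(u) = (K_n/L_n) c(v). *)
Fixpoint sub_volume N (L K : 'I_N -> nat) (cp : rat) (gp : grid N)
    (t : tree 'I_N) (s : tree (grid N)) : rat :=
  let: Nd n ts := t in let: Nd g ss := s in
  if ts is [::] then 0
  else
    let cu := ((K n)%:R / (L n)%:R) * cp in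
    ((g n)%:R - 1) * cu + (if g != gp then cp else 0)
    + (fix go (ts : seq (tree 'I_N)) (ss : seq (tree (grid N))) : rat :=
         match ts, ss with
         | t1 :: ts1, s1 :: ss1 => sub_volume L K cu g t1 s1 + go ts1 ss1
         | _, _ => 0
         end) ts ss.

Definition root_card N (L : 'I_N -> nat) : rat := (\prod_j L j)%N%:R.

Definition volume N (L K : 'I_N -> nat) (H : ttm_tree N) (pi : scheme N) : rat :=
  \sum_(p <- zip H pi.2) sub_volume L K (root_card L) pi.1 p.1 p.2.

(* The dynamic-programming algorithm, instrumented with a counter of    *)
(* DP-table lookups (a state monad over nat).                           *)
Definition M (A : Type) := nat -> A * nat.
Definition ret A (a : A) : M A := fun c => (a, c).
Definition bind A B (m : M A) (f : A -> M B) : M B :=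
  fun c => let: (a, c') := m c in f a c'.

Definition lookup (col : seq rat) (i : nat) : M rat :=
  fun c => (nth 0 col i, c.+1).

Fixpoint mapM A B (f : A -> M B) (s : seq A) : M (seq B) :=
  match s with
  | [::] => ret [::]
  | a :: s' => bind (f a) (fun b => bind (mapM f s') (fun bs => ret (b :: bs)))
  end.

(* (index, value) of a minimum entry of a column of size n >= 1 *)
Definition argminM (n : nat) (col : seq rat) : M (nat * rat) :=
  bind (lookup col 0) (fun v0 =>
  foldr (fun i (acc : M (nat * rat)) =>
           bind acc (fun bv => bind (lookup col i) (fun v =>
             ret (if v < bv.2 then (i, v) else bv))))
        (ret (0%N, v0)) (rev (iota 1 n.-1))).

Section DP.
Variables (N : nat) (L K : 'I_N -> nat) (Gs : seq (grid N)).

Definition nG := size Gs.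

(* combining the children w (columns cols, with precomputed minima mins)
   into the parent's entry at grid index i, where cpar = |In(w)| is the
   cardinality of the parent: one lookup per child *)
Definition sum_children (cpar : rat) (cols : seq (seq rat)) (mins : seq rat) (i : nat)
    : M rat :=
  bind (mapM (fun p => bind (lookup p.1 i) (fun same => ret (Num.min same (p.2 + cpar))))
             (zip cols mins)) (fun vs => ret (\sum_(v <- vs) v)).

Definition col_mins (cols : seq (seq rat)) : M (seq rat) :=
  mapM (fun c => bind (argminM nG c) (fun mv => ret mv.2)) cols.

(* bottom-up pass: table column T(u, .) for every node u of the subtree *)
Fixpoint dp_table (cp : rat) (t : tree 'I_N) : M (tree (seq rat)) :=
  let: Nd n ts := t in
  if ts is [::] then ret (Nd (nseq nG 0) [::])
  else
    let cu := ((K n)%:R / (L n)%:R) * cp in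
    bind ((fix go (ts : seq (tree 'I_N)) : M (seq (tree (seq rat))) :=
             match ts with
             | [::] => ret [::]
             | t1 :: ts1 => bind (dp_table cu t1) (fun r =>
                            bind (go ts1) (fun rs => ret (r :: rs)))
             end) ts) (fun tabs =>
    let cols := [seq (let: Nd c _ := tb in c) | tb <- tabs] in
    bind (col_mins cols) (fun mins =>
    bind (mapM (fun i => bind (sum_children cu cols mins i) (fun sc =>
            ret ((((nth [ffun => 0%N] Gs i) n)%:R - 1) * cu + sc)))
          (iota 0 nG)) (fun col =>
    ret (Nd col tabs)))).

(* top-down pass: given the grid index i of the parent (cardinality cpar),
   choose the grid index of child t (whose table is tb) and recurse *)
Fixpoint dp_rebuild (cpar : rat) (i : nat) (t : tree 'I_N) (tb : tree (seq rat))
    : M (tree (grid N)) :=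
  let: Nd n ts := t in let: Nd col tbs := tb in
  bind (lookup col i) (fun same =>
  bind (argminM nG col) (fun mw =>
  let j := if same <= mw.2 + cpar then i else mw.1 in
  let cu := ((K n)%:R / (L n)%:R) * cpar in
  bind ((fix go (ts : seq (tree 'I_N)) (tbs : seq (tree (seq rat)))
           : M (seq (tree (grid N))) :=
           match ts, tbs with
           | t1 :: ts1, b1 :: tbs1 => bind (dp_rebuild cu j t1 b1) (fun r =>
                                      bind (go ts1 tbs1) (fun rs => ret (r :: rs)))
           | _, _ => ret [::]
           end) ts tbs) (fun subs =>
  ret (Nd (nth [ffun => 0%N] Gs j) subs)))).

Definition dp_root (H : ttm_tree N) : M (option (scheme N)) :=
  if Gs is [::] then ret None else
  let c0 := root_card L in
  bind (mapM (dp_table c0) H) (fun tabs =>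
  let cols := [seq (let: Nd c _ := tb in c) | tb <- tabs] in
  bind (col_mins cols) (fun mins =>
  bind (mapM (sum_children c0 cols mins) (iota 0 nG)) (fun rootcol =>
  bind (argminM nG rootcol) (fun best =>
  bind (mapM (fun p => dp_rebuild c0 best.1 p.1 p.2) (zip H tabs)) (fun subs =>
  ret (Some (nth [ffun => 0%N] Gs best.1, subs))))))).

End DP.

(* all valid grids (enumeration only, no table lookups) *)
Definition valid_grids N (P : nat) (K : 'I_N -> nat) : seq (grid N) :=
  [seq h <- map (fun g : {ffun 'I_N -> 'I_P.+1} => [ffun i => (g i : nat)] : grid N)
                (enum {ffun 'I_N -> 'I_P.+1})
     | valid_grid P K h].

Definition ttm_dp N (L K : 'I_N -> nat) (P : nat) (H : ttm_tree N)
    : option (scheme N) * nat :=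
  dp_root L K (valid_grids P K) H 0%N.

From HB Require Import structures.
From mathcomp Require Import all_boot all_order all_algebra.
From mathcomp Require Import zify.
From Stdlib Require List.
Import Order.TTheory GRing.Theory Num.Theory.
Local Open Scope ring_scope.
Set Implicit Arguments.
Unset Strict Implicit.
Unset Printing Implicit Defensive.

(* Fix a subtree t whose parent has cardinality c, and let T_t(g) be the least
   volume of t when its root carries the grid g, the regridding at that root not
   counted.  Below a parent carrying g', the least volume of t is
   min (T_t(g'), min_g T_t(g) + c), and T_t(g) is (g_n - 1) |Out(t)| plus the sum
   of these quantities over the children of t.  The program computes the columns
   T_t bottom-up, then reads a minimizing scheme back top-down; volume is additive
   over subtrees, so the scheme is optimal.  Every node costs O(#valid grids)
   lookups: a column minimum, one lookup per grid when its parent sums up its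
   children, and the top-down choice.  Valid grids are ordered factorizations of P,
   so there are at most psi(P,N) of them. *)

Lemma tree_ind_Forall A (Q : tree A -> Prop) :
  (forall a ts, List.Forall Q ts -> Q (Nd a ts)) -> forall t, Q t.
Proof.
move=> IH; fix F 1; case=> a ts; apply: IH.
by elim: ts => [|t ts IHts]; constructor.
Qed.

Definition root_label A (t : tree A) : A := let: Nd a _ := t in a.

Lemma Forall2_size A B (R : A -> B -> Prop) s t :
  List.Forall2 R s t -> size s = size t.
Proof. by elim=> //= a b s' t' _ _ ->. Qed.

Lemma Forall2_eq_map A B (g : A -> B) s t :
  List.Forall2 (fun a b => b = g a) s t -> t = map g s.
Proof. by elim=> //= a b s' t' -> _ ->. Qed.

Lemma sumn_map_const A (c : nat) (s : seq A) : sumn (map (fun=> c) s) = (size s * c)%N.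
Proof. by elim: s => //= a s ->; rewrite mulSn. Qed.

Lemma fix_mapM A B (f : A -> M B) ts :
  (fix go (ts : seq A) : M (seq B) :=
     match ts with
     | [::] => ret [::]
     | t1 :: ts1 => bind (f t1) (fun r => bind (go ts1) (fun rs => ret (r :: rs)))
     end) ts = mapM f ts.
Proof. by elim: ts => //= t ts ->. Qed.

Lemma fix_mapM_zip A A' B (f : A -> A' -> M B) ts tbs :
  (fix go (ts : seq A) (tbs : seq A') : M (seq B) :=
     match ts, tbs with
     | t1 :: ts1, b1 :: tbs1 =>
         bind (f t1 b1) (fun r => bind (go ts1 tbs1) (fun rs => ret (r :: rs)))
     | _, _ => ret [::]
     end) ts tbs = mapM (fun p => f p.1 p.2) (zip ts tbs).
Proof. by elim: ts tbs => [|t ts IH] [|b tbs] //=; rewrite IH. Qed.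

Lemma fix_sum_zip A A' (f : A -> A' -> rat) ts ss :
  (fix go (ts : seq A) (ss : seq A') : rat :=
     match ts, ss with
     | t1 :: ts1, s1 :: ss1 => f t1 s1 + go ts1 ss1
     | _, _ => 0
     end) ts ss = \sum_(p <- zip ts ss) f p.1 p.2.
Proof. by elim: ts ss => [|t ts IH] [|s ss]; rewrite /= ?big_nil // big_cons IH. Qed.

Lemma fix_all_zip A A' (f : A -> A' -> bool) ts ss :
  (fix go (ts : seq A) (ss : seq A') : bool :=
     match ts, ss with
     | [::], [::] => true
     | t1 :: ts1, s1 :: ss1 => f t1 s1 && go ts1 ss1
     | _, _ => false
     end) ts ss = (size ts == size ss) && all (fun p => f p.1 p.2) (zip ts ss).
Proof.
elim: ts ss => [|t ts IH] [|s ss] //=; rewrite IH eqSS.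
by case: (f t s); rewrite ?andbF.
Qed.

Lemma same_shape_Nd A B (a : A) (b : B) ts ss :
  same_shape (Nd a ts) (Nd b ss) =
  (size ts == size ss) && all (fun p => same_shape p.1 p.2) (zip ts ss).
Proof. by rewrite -(fix_all_zip (@same_shape A B)). Qed.

Definition hoare A (m : M A) (k : nat) (Q : A -> Prop) :=
  forall c, exists a k', [/\ m c = (a, c + k')%N, (k' <= k)%N & Q a].

Lemma hoare_ret A (a : A) k (Q : A -> Prop) : Q a -> hoare (ret a) k Q.
Proof. by move=> Qa c; exists a, 0%N; rewrite addn0. Qed.

Lemma hoare_bind A B (m : M A) (f : A -> M B) k1 k2 k Q Q' :
  hoare m k1 Q -> (forall a, Q a -> hoare (f a) k2 Q') -> (k1 + k2 <= k)%N ->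
  hoare (bind m f) k Q'.
Proof.
move=> Hm Hf Hk c; have [a [k1' [E1 le1 Qa]]] := Hm c.
have [b [k2' [E2 le2 Qb]]] := Hf a Qa (c + k1')%N.
exists b, (k1' + k2')%N; split=> //; last by lia.
by rewrite /bind E1 E2 addnA.
Qed.

Lemma hoare_conseq A (m : M A) k k' (Q Q' : A -> Prop) :
  hoare m k Q -> (forall a, Q a -> Q' a) -> (k <= k')%N -> hoare m k' Q'.
Proof.
move=> H QQ' kk' c; have [a [k1 [E le Qa]]] := H c.
by exists a, k1; split; [|apply: leq_trans kk' | apply: QQ'].
Qed.

Lemma hoare_lookup col i : hoare (lookup col i) 1 (eq^~ (nth 0 col i)).
Proof. by move=> c; exists (nth 0 col i), 1%N; rewrite addn1. Qed.

Lemma hoare_mapM A B (f : A -> M B) (k : A -> nat) (R : A -> B -> Prop) s kk :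
  List.Forall (fun a => hoare (f a) (k a) (R a)) s -> (sumn (map k s) <= kk)%N ->
  hoare (mapM f s) kk (List.Forall2 R s).
Proof.
move=> Hs; elim: Hs kk => [|a s' Ha _ IH] kk /= Hk; first exact: hoare_ret.
apply: (hoare_bind Ha) => [b Rb|]; last exact: Hk.
apply: (hoare_bind (k2 := 0) (IH _ (leqnn _))) => [bs Rbs|]; last by rewrite addn0.
exact/hoare_ret/List.Forall2_cons.
Qed.

Lemma hoare_mapM_iota B (f : nat -> M B) (F : nat -> B) x0 n k :
  (forall i, hoare (f i) k (eq^~ (F i))) ->
  hoare (mapM f (iota 0 n)) (n * k) (fun s => forall j, (j < n)%N -> nth x0 s j = F j).
Proof.
move=> Hf.
apply: (hoare_conseq (hoare_mapM (k := fun=> k) (R := fun i v => v = F i) _ (leqnn _))).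
- by apply/List.Forall_forall => i _; apply: Hf.
- move=> s /Forall2_eq_map -> j jn.
  by rewrite (nth_map 0%N) ?size_iota // nth_iota.
- by rewrite sumn_map_const size_iota.
Qed.

Definition is_argmin n (col : seq rat) (p : nat * rat) :=
  [/\ (p.1 < n)%N, p.2 = nth 0 col p.1 & forall i, (i < n)%N -> p.2 <= nth 0 col i].

Lemma is_argmin_value n col p q : is_argmin n col p -> is_argmin n col q -> p.2 = q.2.
Proof.
move=> [pn Ep minp] [qn Eq minq]; apply/le_anti/andP.
by split; [rewrite Eq; apply: minp | rewrite Ep; apply: minq].
Qed.

Lemma hoare_argminM n col : (0 < n)%N -> hoare (argminM n col) n (is_argmin n col).
Proof.
case: n => // n _; rewrite /argminM /=.
apply: (hoare_bind (k2 := n) (hoare_lookup _ _)) => [_ ->|//].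
elim: n => [|n IH]; first by apply: hoare_ret; split=> // -[].
rewrite -[n.+1]addn1 iotaD rev_cat /=.
apply: (hoare_bind (k2 := 1) IH) => [[b bv] /= [bn Ebv minb]|]; last by rewrite addn1.
apply: (hoare_bind (k2 := 0) (hoare_lookup _ _)) => [_ ->|//].
apply: hoare_ret; rewrite add1n addn1; case: ifP => /= [lt|/negbT]; last rewrite -leNgt.
- split=> // i; rewrite ltnS leq_eqVlt => /orP [/eqP -> //|lti].
  exact: ltW (lt_le_trans lt (minb _ lti)).
- split=> // [|i]; first exact: ltnW.
  by rewrite ltnS leq_eqVlt => /orP [/eqP ->|/minb].
Qed.

Section DynamicProgram.
Variables (N : nat) (L K : 'I_N -> nat) (P : nat) (Gs : seq (grid N)).
Hypothesis Gs_gt0 : (0 < nG Gs)%N.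
Hypothesis Gs_uniq : uniq Gs.
Hypothesis mem_Gs : forall g, (g \in Gs) = valid_grid P K g.

Local Notation nG := (nG Gs).
Local Notation grid_at i := (nth [ffun => 0%N] Gs i).
Local Notation child_card n cp := ((K n)%:R / (L n)%:R * cp).

Lemma grid_at_valid i : (i < nG)%N -> valid_grid P K (grid_at i).
Proof. by move=> ilt; rewrite -mem_Gs mem_nth. Qed.

Lemma grid_at_index g : valid_grid P K g -> exists2 j, (j < nG)%N & grid_at j = g.
Proof.
by rewrite -mem_Gs => gin; exists (index g Gs); [rewrite index_mem | apply: nth_index].
Qed.

Lemma grid_at_inj i j : (i < nG)%N -> (j < nG)%N -> (grid_at i == grid_at j) = (i == j).
Proof. by move=> ilt jlt; rewrite nth_uniq. Qed.

Definition valid_labels (s : tree (grid N)) := all (valid_grid P K) (tree_labels s).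

Lemma valid_labels_Nd g ss : valid_labels (Nd g ss) = valid_grid P K g && all valid_labels ss.
Proof.
rewrite /valid_labels /=; congr andb.
by elim: ss => //= s ss IH; rewrite all_cat IH.
Qed.

Lemma sub_volume_Nd cp gp n ts g ss :
  sub_volume L K cp gp (Nd n ts) (Nd g ss) =
  if ts is [::] then 0 else
  ((g n)%:R - 1) * child_card n cp + (if g != gp then cp else 0)
  + \sum_(p <- zip ts ss) sub_volume L K (child_card n cp) g p.1 p.2.
Proof. by case: ts => // t ts; rewrite -(fix_sum_zip (sub_volume L K _ g)). Qed.

Lemma dp_table_Nd cp (n : 'I_N) ts : (0 < size ts)%N ->
  dp_table L K Gs cp (Nd n ts) =
  bind (mapM (dp_table L K Gs (child_card n cp)) ts) (fun tabs =>
  let cols := map (@root_label _) tabs in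
  bind (col_mins Gs cols) (fun mins =>
  bind (mapM (fun i => bind (sum_children (child_card n cp) cols mins i) (fun sc =>
          ret (((grid_at i n)%:R - 1) * child_card n cp + sc))) (iota 0 nG)) (fun col =>
  ret (Nd col tabs)))).
Proof. by case: ts => // t ts _; rewrite -(fix_mapM (dp_table L K Gs _)). Qed.

Definition colmin (col : seq rat) := (argminM nG col 0%N).1.2.

Lemma colmin_argmin col : exists2 p, is_argmin nG col p & p.2 = colmin col.
Proof.
rewrite /colmin; have [p [k [E _ Hp]]] := hoare_argminM col Gs_gt0 0%N.
by exists p; rewrite // E.
Qed.

Lemma argmin_colmin col p : is_argmin nG col p -> p.2 = colmin col.
Proof. by have [q Hq <-] := colmin_argmin col; move/is_argmin_value; apply. Qed.

Lemma colmin_le col i : (i < nG)%N -> colmin col <= nth 0 col i.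
Proof. by have [[j v] [_ _ minv] /= <-] := colmin_argmin col; apply: minv. Qed.

Lemma hoare_col_mins cols :
  hoare (col_mins Gs cols) (size cols * nG) (eq^~ (map colmin cols)).
Proof.
apply: (hoare_conseq (hoare_mapM (k := fun=> nG) (R := fun c m => m = colmin c) _ (leqnn _))).
- apply/List.Forall_forall => c _.
  apply: (hoare_bind (k2 := 0) (hoare_argminM c Gs_gt0)) => [p /argmin_colmin Hp|];
    [exact: hoare_ret | by rewrite addn0].
- by move=> ms /Forall2_eq_map.
- by rewrite sumn_map_const.
Qed.

Lemma hoare_sum_children cu cols i :
  hoare (sum_children cu cols (map colmin cols) i) (size cols)
    (eq^~ (\sum_(c <- cols) Num.min (nth 0 c i) (colmin c + cu))).
Proof.
apply: (hoare_bind (k2 := 0) (hoare_mapM (k := fun=> 1%N)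
          (R := fun p v => v = Num.min (nth 0 p.1 i) (p.2 + cu)) _ (leqnn _))).
- apply/List.Forall_forall => p _.
  by apply: (hoare_bind (k2 := 0) (hoare_lookup _ _)) => [_ ->|//]; apply: hoare_ret.
- move=> vs /Forall2_eq_map ->; apply: hoare_ret.
  by elim: cols => [|c cols IH]; rewrite /= ?big_nil // !big_cons IH.
- by rewrite addn0 sumn_map_const size_zip size_map minnn muln1.
Qed.

(* Entry [j] of the root column of the table of a subtree is the least volume of
   the subtree when its root carries grid [j], not counting the regridding at the
   root itself.  Below a parent with grid [i] and cardinality [cp], the root either
   keeps grid [i] or pays [cp] to move to a best grid. *)
Definition opt_below (cp : rat) (tb : tree (seq rat)) (i : nat) :=
  Num.min (nth 0 (root_label tb) i) (colmin (root_label tb) + cp).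

Definition attains_opt_below cp i t tb (s : tree (grid N)) :=
  [/\ same_shape t s, valid_labels s & sub_volume L K cp (grid_at i) t s = opt_below cp tb i].

(* Every node strictly below the root of [t] costs [nG] lookups for the minimum of
   its column and [nG] for its entries in the sums of its parent; the top-down pass
   costs [nG.+1] lookups per node. *)
Definition rebuild_cost (t : tree 'I_N) := (nG.+1 * tree_nodes t)%N.
Definition table_cost (t : tree 'I_N) := (2 * nG * (tree_nodes t).-1)%N.

Definition table_spec cp t tb :=
  (forall s i, same_shape t s -> valid_labels s -> (i < nG)%N ->
     opt_below cp tb i <= sub_volume L K cp (grid_at i) t s) /\
  (forall i, (i < nG)%N ->
     hoare (dp_rebuild L K Gs cp i t tb) (rebuild_cost t) (attains_opt_below cp i t tb)).

Lemma children_lower_bound cu j ts tabs ss : (j < nG)%N ->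
  List.Forall2 (table_spec cu) ts tabs -> size ts = size ss ->
  all (fun p => same_shape p.1 p.2) (zip ts ss) -> all valid_labels ss ->
  \sum_(tb <- tabs) opt_below cu tb j
    <= \sum_(p <- zip ts ss) sub_volume L K cu (grid_at j) p.1 p.2.
Proof.
move=> jn Htabs; elim: Htabs ss => [|t tb ts' tabs' [low _] _ IH] [|s ss] //=.
  by rewrite !big_nil.
rewrite !big_cons => -[hs] /andP [sh shs] /andP [vs vss].
exact: lerD (low s j sh vs jn) (IH ss hs shs vss).
Qed.

Lemma hoare_rebuild_children cu j ts tabs : (j < nG)%N ->
  List.Forall2 (table_spec cu) ts tabs ->
  hoare (mapM (fun p => dp_rebuild L K Gs cu j p.1 p.2) (zip ts tabs))
    (sumn (map rebuild_cost ts))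
    (fun subs => [/\ size ts = size subs, all (fun p => same_shape p.1 p.2) (zip ts subs),
       all valid_labels subs &
       \sum_(p <- zip ts subs) sub_volume L K cu (grid_at j) p.1 p.2
         = \sum_(tb <- tabs) opt_below cu tb j]).
Proof.
move=> jn; elim=> [|t tb ts' tabs' [_ reb] _ IH] /=.
  by apply: hoare_ret; rewrite !big_nil.
apply: (hoare_bind (reb j jn)) => [s [sh vs sv]|]; last exact: leqnn.
apply: (hoare_bind (k2 := 0) IH) => [subs [e1 e2 e3 e4]|]; last by rewrite addn0.
by apply: hoare_ret; rewrite /= e1 sh vs e2 e3 !big_cons sv e4.
Qed.

Definition node_value cu (n : 'I_N) (ts : seq (tree 'I_N)) tabs j :=
  if ts is [::] then 0
  else ((grid_at j n)%:R - 1) * cu + \sum_(tb <- tabs) opt_below cu tb j.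

Lemma sumn_rebuild_cost ts :
  sumn (map rebuild_cost ts) = (nG.+1 * sumn (map (@tree_nodes _) ts))%N.
Proof. by elim: ts => [|t ts IH] /=; rewrite ?muln0 // IH mulnDr. Qed.

Section Node.
Variables (cp : rat) (n : 'I_N) (ts : seq (tree 'I_N)) (tabs : seq (tree (seq rat))).
Variable col : seq rat.
Hypothesis cp_ge0 : 0 <= cp.
Hypothesis children_spec : List.Forall2 (table_spec (child_card n cp)) ts tabs.
Hypothesis col_value :
  forall j, (j < nG)%N -> nth 0 col j = node_value (child_card n cp) n ts tabs j.

Lemma node_lower_bound s i : same_shape (Nd n ts) s -> valid_labels s -> (i < nG)%N ->
  opt_below cp (Nd col tabs) i <= sub_volume L K cp (grid_at i) (Nd n ts) s.
Proof.
case: s => g ss; rewrite same_shape_Nd valid_labels_Nd => /andP [/eqP hs shs] /andP [vg vss] ilt.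
have [j jlt <-] := grid_at_index vg.
rewrite sub_volume_Nd /opt_below /= ge_min.
move: (col_value ilt) (col_value jlt); rewrite /node_value.
case: ts children_spec hs shs => [|t ts'] Htabs hs shs coli colj; first by rewrite coli.
have colj_le : nth 0 col j <= ((grid_at j n)%:R - 1) * child_card n cp
    + \sum_(p <- zip (t :: ts') ss) sub_volume L K (child_card n cp) (grid_at j) p.1 p.2.
  by rewrite colj lerD2l children_lower_bound.
case: (eqVneq j i) => [<-|jni]; first by rewrite eqxx addr0 colj_le.
apply/orP; right; rewrite grid_at_inj // jni addrAC lerD2r.
exact: le_trans (colmin_le _ jlt) colj_le.
Qed.

Lemma hoare_rebuild_node i : (i < nG)%N ->
  hoare (dp_rebuild L K Gs cp i (Nd n ts) (Nd col tabs)) (rebuild_cost (Nd n ts))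
    (attains_opt_below cp i (Nd n ts) (Nd col tabs)).
Proof.
move=> ilt /=.
apply: (hoare_bind (k2 := (nG + sumn (map rebuild_cost ts))%N) (hoare_lookup col i)) => [_ ->|];
  last by rewrite sumn_rebuild_cost /rebuild_cost /=; lia.
apply: (hoare_bind (k2 := sumn (map rebuild_cost ts)) (hoare_argminM col Gs_gt0)) => [[j0 m] Hm|//].
have [j0lt /= m_def _] := Hm.
set j := if _ <= _ then i else j0; rewrite fix_mapM_zip.
have jlt : (j < nG)%N by rewrite /j; case: ifP.
apply: (hoare_bind (k2 := 0) (hoare_rebuild_children jlt children_spec)) => [subs|];
  last by rewrite addn0.
case=> e1 e2 e3 e4; apply: hoare_ret; split.
- by rewrite same_shape_Nd e1 eqxx e2.
- by rewrite valid_labels_Nd grid_at_valid // e3.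
rewrite sub_volume_Nd e4 /opt_below /= -(argmin_colmin Hm) /=.
move: (col_value ilt) (col_value jlt) (col_value j0lt); rewrite /node_value.
case: ts children_spec => [|t ts'] _ coli colj colj0.
  by rewrite coli m_def colj0 add0r minEle cp_ge0.
rewrite addrAC -colj /j; case: ifP => [le|nle].
  by rewrite eqxx addr0 minEle le.
have j0i : j0 != i by apply: contraFneq nle => <-; rewrite m_def lerDl.
by rewrite grid_at_inj // j0i -m_def minEle nle.
Qed.

End Node.

Lemma table_cost_children ts :
  (sumn (map table_cost ts) + 2 * nG * size ts = 2 * nG * sumn (map (@tree_nodes _) ts))%N.
Proof.
elim: ts => //= -[a l] ts IH.
by rewrite mulnDr -IH /table_cost /=; lia.
Qed.

Lemma hoare_dp_table t cp : 0 <= cp ->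
  hoare (dp_table L K Gs cp t) (table_cost t) (table_spec cp t).
Proof.
elim/tree_ind_Forall: t cp => n ts IH cp cp_ge0.
set cu := child_card n cp.
have cu_ge0 : 0 <= cu by rewrite mulr_ge0 ?divr_ge0 ?ler0n.
have [/size0nil -> | ts_gt0] := posnP (size ts).
  have col_value j : (j < nG)%N -> nth 0 (nseq nG 0) j = node_value cu n [::] [::] j.
    by move=> jlt; rewrite nth_nseq jlt.
  apply: hoare_ret.
  by split=> [s i | i]; [apply: node_lower_bound | apply: hoare_rebuild_node].
rewrite dp_table_Nd //.
have children_hoare :
    List.Forall (fun t => hoare (dp_table L K Gs cu t) (table_cost t) (table_spec cu t)) ts.
  by apply: List.Forall_impl IH => t; apply.
apply: (hoare_bind (k2 := (size ts * nG + nG * size ts)%N) (hoare_mapM children_hoare (leqnn _)));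
  last by rewrite {2}/table_cost /= -table_cost_children; lia.
move=> tabs children_spec; have size_tabs := Forall2_size children_spec.
apply: (hoare_bind (hoare_col_mins _)) => [mins ->|]; last by rewrite size_map size_tabs.
have node_valueE j : node_value cu n ts tabs j
    = ((grid_at j n)%:R - 1) * cu + \sum_(tb <- tabs) opt_below cu tb j.
  by case: ts ts_gt0 {IH children_hoare children_spec size_tabs}.
apply: (hoare_bind (k2 := 0)
          (hoare_mapM_iota 0 nG (k := size tabs) (F := node_value cu n ts tabs) _)).
- move=> i; apply: (hoare_bind (k2 := 0) (hoare_sum_children _ _ _)) => [_ ->|];
    last by rewrite size_map addn0.
  by apply: hoare_ret; rewrite node_valueE big_map.
- move=> col col_value; apply: hoare_ret.
  by split=> [s i | i]; [apply: node_lower_bound | apply: hoare_rebuild_node].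
- by rewrite addn0.
Qed.

Definition min_volume_scheme (H : ttm_tree N) (pi : scheme N) :=
  is_scheme P K H pi /\
  forall pi', is_scheme P K H pi' -> volume L K H pi <= volume L K H pi'.

Lemma hoare_dp_root H :
  hoare (dp_root L K Gs H) (6 * nG * ttm_size H) (oapp (min_volume_scheme H) False).
Proof.
rewrite /dp_root; case E: Gs Gs_gt0 => [//|g0 Gs'] _; rewrite -E.
set c0 := root_card L; set S := sumn (map (@tree_nodes _) H).
have tables_hoare :
    List.Forall (fun t => hoare (dp_table L K Gs c0 t) (table_cost t) (table_spec c0 t)) H.
  by apply/List.Forall_forall => t _; apply/hoare_dp_table/ler0n.
apply: (hoare_bind (k2 := (size H * nG + (nG * size H + (nG + sumn (map rebuild_cost H))))%N)
          (hoare_mapM tables_hoare (leqnn _))); last first.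
  have := table_cost_children H; have := sumn_rebuild_cost H; rewrite /ttm_size -/S.
  by move: Gs_gt0; nia.
move=> tabs tables_spec; have size_tabs := Forall2_size tables_spec.
apply: (hoare_bind (hoare_col_mins _)) => [mins ->|]; last by rewrite size_map size_tabs.
apply: (hoare_bind (k2 := (nG + sumn (map rebuild_cost H))%N)
          (hoare_mapM_iota 0 nG (k := size H)
             (F := fun i => \sum_(tb <- tabs) opt_below c0 tb i) _));
  last by rewrite size_tabs.
  move=> i; apply: (hoare_conseq (hoare_sum_children _ _ _)) => [_ ->|].
    by rewrite big_map.
  by rewrite size_map size_tabs.
move=> rootcol rootcol_value.
apply: (hoare_bind (hoare_argminM rootcol Gs_gt0)) => [[b bv] [blt /= bv_def bv_min]|];
  last exact: leqnn.
apply: (hoare_bind (k2 := 0) (hoare_rebuild_children blt tables_spec)) => [subs|];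
  last by rewrite addn0.
case=> e1 e2 e3 e4; apply: hoare_ret; split.
  by rewrite /is_scheme /= grid_at_valid // e1 eqxx e2; exact: e3.
case=> g' ss' /and4P [/= vg /eqP hs shs vss].
have [j jlt <-] := grid_at_index vg.
rewrite /volume /= e4; apply: le_trans (children_lower_bound jlt tables_spec hs shs vss).
by rewrite -!rootcol_value // -bv_def bv_min.
Qed.

End DynamicProgram.

Lemma valid_grid_le N P (K : 'I_N -> nat) (g : grid N) i :
  (0 < P)%N -> valid_grid P K g -> (g i <= P)%N.
Proof.
move=> P_gt0 /andP [/andP [_ /eqP prodg] _]; apply: dvdn_leq P_gt0 _.
by rewrite -prodg (bigD1 i) //= dvdn_mulr.
Qed.

Lemma mem_valid_grids N P (K : 'I_N -> nat) g :
  (0 < P)%N -> (g \in valid_grids P K) = valid_grid P K g.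
Proof.
move=> P_gt0; rewrite mem_filter; case: (boolP (valid_grid P K g)) => //= validg.
apply/mapP; exists [ffun i => inord (g i) : 'I_P.+1]; first by rewrite mem_enum.
by apply/ffunP => i; rewrite !ffunE inordK // ltnS (valid_grid_le _ P_gt0 validg).
Qed.

Lemma valid_grids_uniq N P (K : 'I_N -> nat) : uniq (valid_grids P K).
Proof.
apply: filter_uniq; rewrite map_inj_uniq ?enum_uniq //.
by move=> g1 g2 /ffunP eq12; apply/ffunP => i; apply/val_inj; have := eq12 i; rewrite !ffunE.
Qed.

Lemma size_valid_grids_le_psi N P (K : 'I_N -> nat) : (size (valid_grids P K) <= psi P N)%N.
Proof.
rewrite size_filter count_map /psi cardE /enum_mem size_filter count_filter.
apply: sub_count => g /= /andP [+ _].
rewrite inE /valid_grid /is_grid => /andP [/andP [/forallP g_gt0 /eqP prodg] _].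
apply/andP; split.
  by apply/forallP => i; have := g_gt0 i; rewrite ffunE.
by apply/eqP; apply: etrans prodg; apply: eq_bigr => i _; rewrite ffunE.
Qed.

Theorem mainTheorem3 :
  exists C : nat,
  forall (N : nat) (L K : 'I_N -> nat) (P : nat) (H : ttm_tree N),
    (1 <= N)%N ->
    (forall n, 0 < K n)%N ->
    (forall n, 0 < L n)%N ->
    (forall n, K n <= L n)%N ->
    (0 < P)%N ->
    is_TTM H ->
    ((ttm_dp L K P H).2 <= C * (ttm_size H * psi P N))%N /\
    match (ttm_dp L K P H).1 with
    | Some pi =>
        is_scheme P K H pi /\
        forall pi' : scheme N, is_scheme P K H pi' ->
          volume L K H pi <= volume L K H pi'
    | None => forall pi' : scheme N, ~~ is_scheme P K H pi'
    end.
Proof.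
exists 6%N => N L K P H _ _ _ _ P_gt0 _; rewrite /ttm_dp.
have mem_Gs g := mem_valid_grids K g P_gt0.
have [/size0nil Gs0 | Gs_gt0] := posnP (size (valid_grids P K)).
  by rewrite Gs0; split=> // pi'; rewrite /is_scheme -mem_Gs Gs0.
have [o [k [-> cost opt]]] := hoare_dp_root L Gs_gt0 (valid_grids_uniq P K) mem_Gs H 0%N.
split; last by case: o opt.
apply: leq_trans cost _; rewrite -mulnA leq_mul2l mulnC leq_mul2l.
by rewrite size_valid_grids_le_psi !orbT.
Qed.
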